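(* Let $A\in\mathbb{R}^{n\times m}$ with $n<m$ have columns $\alpha_1,\dots,\alpha_m$ with $\|\alpha_i\|_2=1$ for all $i$, and let $\mu=\max_{i\neq j}|\langle\alpha_i,\alpha_j\rangle|$ be its coherence, assumed positive. Let $c_{ij}=\langle\alpha_i,\alpha_j\rangle$, $\nu(i)=\max_{j\neq i}\frac{|c_{ij}|}{c_{ii}}$, $\rho(i)=\frac{\nu(i)}{\nu(i)+1}$, and let $l^*$ be the largest integer $l\in\{0,\dots,m\}$ such that the sum of the $l$ largest values among $\rho(1),\dots,\rho(m)$ is $<\frac12$. Then for every integer $k$ with $k<\frac12(1+\mu^{-1})$ we have $\max_{\mathcal{S}\subseteq[m],|\mathcal{S}|=k}\sum_{i\in\mathcal{S}}\rho(i)<\frac12$, and hence $l^*\ge k$.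
   Context: $[m]=\{1,\dots,m\}$. $\langle\cdot,\cdot\rangle$ is the Euclidean inner product. *)

From HB Require Import structures.
From mathcomp Require Import all_boot all_order all_algebra.
Set Implicit Arguments. Unset Strict Implicit. Unset Printing Implicit Defensive.
Import Order.TTheory GRing.Theory Num.Theory.
Local Open Scope ring_scope.

Section Coherence.
Variables (R : realFieldType) (n m : nat).

Definition gram (A : 'M[R]_(n, m)) (i j : 'I_m) : R :=
  \sum_(k < n) A k i * A k j.

(* mu = max_{i <> j} |<alpha_i, alpha_j>| (all values are >= 0, so 0 is a neutral default) *)
Definition coherence (A : 'M[R]_(n, m)) : R :=
  \big[Num.max/0]_(i < m) \big[Num.max/0]_(j < m | j != i) `|gram A i j|.

Definition nu (A : 'M[R]_(n, m)) (i : 'I_m) : R :=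
  \big[Num.max/0]_(j < m | j != i) (`|gram A i j| / gram A i i).

Definition rho (A : 'M[R]_(n, m)) (i : 'I_m) : R := nu A i / (nu A i + 1).

Definition top_sum (A : 'M[R]_(n, m)) (l : nat) : R :=
  \sum_(k < l) nth 0 (sort (fun x y : R => y <= x) [seq rho A i | i : 'I_m]) k.

Definition l_star (A : 'M[R]_(n, m)) : nat :=
  \max_(l < m.+1 | top_sum A l < 2^-1) l.

End Coherence.

From mathcomp Require Import all_boot all_order all_algebra.
From mathcomp Require Import lra.
Set Implicit Arguments.
Unset Strict Implicit.
Unset Printing Implicit Defensive.
Import Order.TTheory GRing.Theory Num.Theory.
Local Open Scope ring_scope.

(* Every rho(i) is at most mu/(mu+1) since t |-> t/(t+1) is increasing, so any
   k of them sum to at most k mu/(mu+1), which is < 1/2 exactly when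
   k < (1 + 1/mu)/2.  That such a k indexes a legitimate prefix (k <= m) comes
   from the Welch-type bound (m-1) mu >= 1: since n < m, the Gram matrix A^T A
   is singular, whereas unit diagonal and off-diagonal entries at most mu with
   (m-1) mu < 1 would make it strictly diagonally dominant. *)

Lemma exists_nonzero_left_kernel (F : fieldType) (p q : nat) (B : 'M[F]_(p, q)) :
  (q < p)%N -> exists2 v : 'rV_p, v *m B = 0 & v != 0.
Proof.
move=> lt_qp; have : kermx B != 0.
  rewrite kermx_eq0 /row_free; apply: contraTN lt_qp => /eqP <-.
  by rewrite -leqNgt rank_leq_col.
by case/rowV0Pn => v /sub_kermxP vB v_neq0; exists v.
Qed.

Lemma diag_dominant_kernel_bound (R : realFieldType) (p : nat) (G : 'M[R]_p)
    (mu : R) (v : 'rV_p) :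
  (forall i, G i i = 1) -> (forall i j, i != j -> `|G i j| <= mu) ->
  v *m G = 0 -> v != 0 -> 1 <= p.-1%:R * mu.
Proof.
move=> G_diag G_off vG v_neq0.
have [j0 vj0_neq0] : exists j, v 0 j != 0.
  apply/existsP; apply: contraNT v_neq0 => /existsPn v0.
  by apply/eqP/rowP => j; rewrite mxE; apply/eqP/negPn/v0.
case: (@arg_maxP _ _ _ j0 xpredT (fun j => `|v 0 j|) isT) => j _ v_max.
have vj_gt0 : 0 < `|v 0 j| by apply: lt_le_trans (v_max j0 isT); rewrite normr_gt0.
have col_j : v 0 j = - \sum_(i | i != j) v 0 i * G i j.
  have := congr1 (fun M : 'rV_p => M 0 j) vG.
  rewrite !mxE (bigD1 j) //= G_diag mulr1 => /eqP.
  by rewrite addr_eq0 => /eqP.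
have : `|v 0 j| <= \sum_(i | i != j) `|v 0 j| * mu.
  rewrite [in X in X <= _]col_j normrN; apply: le_trans (ler_norm_sum _ _ _) _.
  apply: ler_sum => i ij; rewrite normrM.
  by apply: ler_pM => //; [exact: v_max | exact: G_off].
rewrite sumr_const cardC1 card_ord => le_vj.
by rewrite -(ler_pM2l vj_gt0) mulr1 mulrCA mulr_natl.
Qed.

Lemma ler_div_add1 (R : realFieldType) (x y : R) :
  0 <= x -> x <= y -> x / (x + 1) <= y / (y + 1).
Proof.
move=> x_ge0 le_xy; have y_ge0 := le_trans x_ge0 le_xy.
rewrite ler_pdivrMr ?ltr_wpDl // mulrAC ler_pdivlMr ?ltr_wpDl //; nra.
Qed.

Lemma sum_nth_le (R : realDomainType) (s : seq R) (b : R) (l : nat) :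
  0 <= b -> {in s, forall x, x <= b} -> \sum_(k < l) s`_k <= l%:R * b.
Proof.
move=> b_ge0 s_le; have nth_le k : s`_k <= b.
  by case: (ltnP k (size s)) => [/(mem_nth 0)/s_le | /(nth_default 0) ->].
apply: le_trans (ler_sum _ (fun (k : 'I_l) _ => nth_le k)) _.
by rewrite sumr_const card_ord mulr_natl.
Qed.

Lemma coherence_ratio_lt_half (R : realFieldType) (mu x : R) :
  0 < mu -> x < 2^-1 * (1 + mu^-1) -> x * (mu / (mu + 1)) < 2^-1.
Proof.
move=> mu_gt0 x_lt; rewrite mulrA ltr_pdivrMr ?ltr_wpDl ?ltW //.
have : x * mu < 2^-1 * (1 + mu^-1) * mu by rewrite ltr_pM2r.
by rewrite -mulrA mulrDl mul1r mulVf ?gt_eqF // addrC.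
Qed.

Lemma coherence_ratio_le_size (R : realFieldType) (mu : R) (p : nat) :
  0 < mu -> 1 <= p.-1%:R * mu -> 2^-1 * (1 + mu^-1) <= p%:R.
Proof.
move=> mu_gt0 welch; have inv_le : mu^-1 <= p.-1%:R by rewrite -div1r ler_pdivrMr.
have p_pos : p = (p.-1).+1 by case: p welch inv_le => //; rewrite mul0r ler10.
by rewrite p_pos -[p.-1.+1]addn1 natrD; have := ler0n R p.-1; lra.
Qed.

Lemma top_sum_le (R : realFieldType) (n m : nat) (A : 'M[R]_(n, m)) (b : R)
    (l : nat) :
  0 <= b -> (forall i, rho A i <= b) -> top_sum A l <= l%:R * b.
Proof.
move=> b_ge0 rho_le; apply: sum_nth_le => // x.
by rewrite mem_sort => /mapP [i _ ->].
Qed.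

Section UnitNormColumns.
Variables (R : realFieldType) (n m : nat) (A : 'M[R]_(n, m)).
Hypothesis unit_norm : forall i : 'I_m, \sum_(k < n) A k i ^+ 2 = 1.

Lemma gram_diag i : gram A i i = 1.
Proof. by rewrite -(unit_norm i); apply: eq_bigr => k _; rewrite expr2. Qed.

Lemma gram_mx : \matrix_(i, j) gram A i j = A^T *m A.
Proof.
by apply/matrixP => i j; rewrite !mxE; apply: eq_bigr => k _; rewrite mxE.
Qed.

Lemma coherence_ge0 : 0 <= coherence A.
Proof. exact: bigmax_ge_id. Qed.

Lemma gram_le_coherence i j : i != j -> `|gram A i j| <= coherence A.
Proof.
move=> ij; apply: le_trans (le_bigmax _ _ i).
by apply: le_bigmax_cond; rewrite eq_sym.
Qed.

Lemma nu_ge0 i : 0 <= nu A i.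
Proof. exact: bigmax_ge_id. Qed.

Lemma nu_le_coherence i : nu A i <= coherence A.
Proof.
apply: bigmax_le; first exact: coherence_ge0.
by move=> j ji; rewrite gram_diag divr1 gram_le_coherence // eq_sym.
Qed.

Lemma rho_le_coherence_ratio i : rho A i <= coherence A / (coherence A + 1).
Proof. exact: ler_div_add1 (nu_ge0 i) (nu_le_coherence i). Qed.

Lemma welch_bound : (n < m)%N -> 1 <= m.-1%:R * coherence A.
Proof.
move=> lt_nm; have [v vA v_neq0] := exists_nonzero_left_kernel A^T lt_nm.
apply: (diag_dominant_kernel_bound (G := A^T *m A) _ _ _ v_neq0).
- by move=> i; rewrite -gram_mx mxE gram_diag.
- by move=> i j ij; rewrite -gram_mx mxE gram_le_coherence.
- by rewrite mulmxA vA mul0mx.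
Qed.

End UnitNormColumns.

Theorem mainTheorem4 (R : realFieldType) (n m : nat) (A : 'M[R]_(n, m)) :
  (n < m)%N ->
  (forall i : 'I_m, \sum_(k < n) A k i ^+ 2 = 1) ->
  0 < coherence A ->
  forall k : nat, k%:R < 2^-1 * (1 + (coherence A)^-1) ->
    (forall S : {set 'I_m}, #|S| = k -> \sum_(i in S) rho A i < 2^-1) /\
    (k <= l_star A)%N.
Proof.
move=> lt_nm unit_norm mu_gt0 k k_lt.
set b := coherence A / (coherence A + 1).
have rho_le := rho_le_coherence_ratio unit_norm.
have kb_lt : k%:R * b < 2^-1 by exact: coherence_ratio_lt_half.
have b_ge0 : 0 <= b by rewrite divr_ge0 ?addr_ge0 ?coherence_ge0.
split=> [S card_S | ].
  apply: le_lt_trans kb_lt; rewrite -card_S -sum1_card natr_sum mulr_suml.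
  by apply: ler_sum => i _; rewrite mul1r.
have lt_km : (k < m.+1)%N.
  rewrite ltnS -(ler_nat R) ltW //; apply: lt_le_trans k_lt _.
  exact: coherence_ratio_le_size (welch_bound unit_norm lt_nm).
apply: (@leq_bigmax_cond _ _ (fun l : 'I_m.+1 => nat_of_ord l) (Ordinal lt_km)).
exact: le_lt_trans (top_sum_le _ b_ge0 rho_le) kb_lt.
Qed.
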